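(* The polynomial sequences $(G_n(q))_{n\ge1}$ and $(S_n(q))_{n\ge1}$ are $q$-Euler–Gauss sequences, and neither satisfies the $q$-Gauss congruence $\sum_{d\mid n}\mu(d)a_{n/d}(q^d)\equiv 0\pmod{[n]_q}$ at any composite square-free $n$.
   Context: $\Phi_k(q)$ is the $k$-th cyclotomic polynomial, $\mu$ the Möbius function, and $[n]_q=1+q+\dots+q^{n-1}$. For $n>1$ let $s_n$ be the smallest prime factor of $n$ and $g_n$ the greatest prime factor of $n$. Define $S_1(q)=G_1(q)=\Phi_1(q)=q-1$, and for $n>1$, $S_n(q)=\Phi_{s_n}(q^{n/s_n})$ and $G_n(q)=\Phi_{g_n}(q^{n/g_n})$. Congruences of polynomials modulo $[n]_q$ mean divisibility of the difference by $[n]_q$ in $\mathbb{Z}[q]$. A sequence $(a_n(q))$ in $\mathbb{Z}[q]$ is a $q$-Euler–Gauss sequence if for all $n\ge1$, $\prod_{d\mid n,\,\mu(d)=1}a_{n/d}(q^d)\equiv\prod_{d\mid n,\,\mu(d)=-1}a_{n/d}(q^d)\pmod{[n]_q}$. *)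

From mathcomp Require Import all_boot all_order all_algebra.
From mathcomp Require Import cyclotomic.
Set Implicit Arguments. Unset Strict Implicit. Unset Printing Implicit Defensive.
Import GRing.Theory.
Local Open Scope ring_scope.

Definition squarefree (n : nat) : bool :=
  (0 < n)%N && all (fun p => logn p n <= 1)%N (primes n).

(* Moebius function (mu 1 = 1; mu 0 = 0 is an irrelevant convention) *)
Definition mu (n : nat) : int :=
  if squarefree n then (-1) ^+ size (primes n) else 0.

Definition qint (n : nat) : {poly int} := \sum_(i < n) 'X^i.

Definition pdvd (d p : {poly int}) : Prop := exists r : {poly int}, p = r * d.

Definition qsub (p : {poly int}) (d : nat) : {poly int} := p \Po 'X^d.

Definition Sseq (n : nat) : {poly int} :=
  if n == 1%N then 'Phi_1 else qsub 'Phi_(pdiv n) (n %/ pdiv n).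
Definition Gseq (n : nat) : {poly int} :=
  if n == 1%N then 'Phi_1 else qsub 'Phi_(max_pdiv n) (n %/ max_pdiv n).

Definition q_Euler_Gauss (a : nat -> {poly int}) : Prop :=
  forall n : nat, (0 < n)%N ->
    pdvd (qint n)
      (\prod_(d <- divisors n | mu d == 1) qsub (a (n %/ d)%N) d
       - \prod_(d <- divisors n | mu d == -1) qsub (a (n %/ d)%N) d).

Definition q_Gauss_at (a : nat -> {poly int}) (n : nat) : Prop :=
  pdvd (qint n) (\sum_(d <- divisors n) mu d *: qsub (a (n %/ d)%N) d).

From mathcomp Require Import all_boot all_order all_algebra.
From mathcomp Require Import cyclotomic.
From mathcomp Require Import zify ring.
Set Implicit Arguments. Unset Strict Implicit. Unset Printing Implicit Defensive.
Import GRing.Theory.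
Local Open Scope ring_scope.

(* Both sequences are [cyclo_seq c]: [a_1 = q - 1] and [a_n = Phi_P(q^(n/P))] for a
   prime divisor [P = c n] of [n] chosen hereditarily ([c x = c n] whenever
   [c n | x | n]).  Write [n = P^k m] with [P] not dividing [m].  The squarefree
   divisors of [n] are the [d | m] and the [P d], and [mu (P d) = - mu d].  For
   [d | m], and also for [P d] when [k >= 2], the term [a_(n/d)(q^d)] is the single
   polynomial [F = Phi_P(q^(n/P))], so for [k >= 2] the two Euler-Gauss products
   coincide.  For [k = 1] they are [G * E_-(m)(q^P)] and [G * E_+(m)(q^P)] with the
   same power [G] of [F] when [m > 1]; since [[P]_q] divides [F = [P]_(q^m)] (the
   exponents [m i mod P] permute the residues mod [P]) and
   [[n]_q = [P]_q [m]_(q^P)], the congruence follows by induction on [n].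
   For the Gauss sum [T], the same splitting gives [T_n(1) = - T_m(1)] when
   [n = P m] is squarefree with [m > 1], and [T_P(1) = P]; so [|T_n(1)|] is a prime
   divisor of [n], which [n] cannot divide unless [n] is prime. *)

Lemma squarefree_gt0 n : squarefree n -> (0 < n)%N.
Proof. by case/andP. Qed.

Lemma mu1 : mu 1 = 1.
Proof. by []. Qed.

Lemma mu_neq0 d : (mu d != 0) = squarefree d.
Proof. by rewrite /mu; case: (squarefree d); rewrite ?signr_eq0 ?eqxx. Qed.

Lemma squarefree_dvd d n : (d %| n)%N -> squarefree n -> squarefree d.
Proof.
move=> dn /andP [n0 /allP logn_le1]; have d0 := dvdn_gt0 n0 dn.
apply/andP; split=> //; apply/allP => p; rewrite mem_primes => /and3P [pp _ pd].
apply: leq_trans (dvdn_leq_log p n0 dn) _; apply: logn_le1.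
by rewrite mem_primes pp n0 (dvdn_trans pd dn).
Qed.

Lemma logn_squarefree p n : prime p -> (p %| n)%N -> squarefree n -> logn p n = 1%N.
Proof.
move=> pp pn /andP [n0 /allP logn_le1].
have p_n : p \in primes n by rewrite mem_primes pp n0.
by apply/eqP; rewrite eqn_leq logn_le1 //= logn_gt0.
Qed.

Lemma primes_mul_prime p d : prime p -> ~~ (p %| d)%N -> (0 < d)%N ->
  perm_eq (primes (p * d)) (p :: primes d).
Proof.
move=> pp npd d0; apply: uniq_perm; rewrite ?primes_uniq //=.
  by rewrite mem_primes (negbTE npd) !andbF primes_uniq.
move=> q; rewrite in_cons !mem_primes muln_gt0 d0 prime_gt0 //=.
apply/idP/idP => [/andP [qp]|].
  by rewrite Euclid_dvdM // => /orP [|->]; rewrite ?qp ?orbT // dvdn_prime2 // => ->.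
by case/orP=> [/eqP->|/andP [-> qd]]; [rewrite pp dvdn_mulr | rewrite dvdn_mull].
Qed.

Lemma squarefree_mul_prime p d : prime p ->
  squarefree (p * d) = ~~ (p %| d)%N && squarefree d.
Proof.
move=> pp; have p0 := prime_gt0 pp.
case: (boolP (p %| d)%N) => [pd|npd] /=.
  apply/negP=> /andP [pd0 /allP logn_le1].
  have d0 : (0 < d)%N by move: pd0; rewrite muln_gt0 => /andP [].
  have := logn_le1 p; rewrite mem_primes pp pd0 dvdn_mulr //.
  rewrite lognM // (logn_prime _ pp) eqxx ltnS leqn0 => /(_ isT) /eqP.
  by apply/eqP; rewrite -lt0n logn_gt0 mem_primes pp d0 pd.
apply/idP/idP; first exact/squarefree_dvd/dvdn_mull.
case/andP=> d0 /allP logn_le1; apply/andP; split; first by rewrite muln_gt0 p0.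
apply/allP => q; rewrite (perm_mem (primes_mul_prime pp npd d0)) in_cons.
rewrite lognM // (logn_prime _ pp).
case/orP=> [/eqP->|qd]; first by rewrite eqxx logn_coprime ?prime_coprime.
have /negbTE-> : q != p by apply: contraNneq npd => <-; rewrite mem_primes in qd; case/and3P: qd.
exact: logn_le1.
Qed.

Lemma mu_mul_prime p d : prime p -> ~~ (p %| d)%N -> mu (p * d) = - mu d.
Proof.
move=> pp npd; rewrite /mu squarefree_mul_prime // npd /=.
case sqd: (squarefree d); last by rewrite oppr0.
by rewrite (perm_size (primes_mul_prime pp npd (squarefree_gt0 sqd))) exprS mulN1r.
Qed.

Lemma coprime_prime_gt0 p m : prime p -> coprime p m -> (0 < m)%N.
Proof.
move=> pp; apply: contraTT; rewrite lt0n negbK /coprime => /eqP->.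
by rewrite gcdn0 gtn_eqF ?prime_gt1.
Qed.

Definition sqdivisors n := [seq d <- divisors n | squarefree d].

Lemma mem_sqdivisors n d : (0 < n)%N ->
  (d \in sqdivisors n) = (d %| n)%N && squarefree d.
Proof. by move=> n0; rewrite mem_filter -dvdn_divisors // andbC. Qed.

Lemma big_mu_eq_sqdivisors (R : Type) (idx : R) (op : Monoid.com_law idx)
    n (e : int) (f : nat -> R) : e != 0 ->
  \big[op/idx]_(d <- divisors n | mu d == e) f d =
  \big[op/idx]_(d <- sqdivisors n | mu d == e) f d.
Proof.
move=> e0; rewrite big_filter_cond; apply: eq_bigl => d.
by case: eqP => [mue|]; rewrite ?andbF // andbT -mu_neq0 mue.
Qed.

Lemma sum_mu_sqdivisors (V : lmodType int) n (f : nat -> V) :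
  \sum_(d <- divisors n) mu d *: f d = \sum_(d <- sqdivisors n) mu d *: f d.
Proof.
rewrite big_filter [RHS]big_mkcond; apply: eq_bigr => d _.
by case: ifPn => // /negbTE sqd; rewrite /mu sqd scale0r.
Qed.

Section PrimePowerSplit.

Variables (p k m : nat).
Hypotheses (p_prime : prime p) (p_coprime_m : coprime p m) (k_gt0 : (0 < k)%N).

Let p_ndvd_m : ~~ (p %| m)%N. Proof. by rewrite -prime_coprime. Qed.
Let m_gt0 : (0 < m)%N. Proof. exact: coprime_prime_gt0 p_coprime_m. Qed.
Let n_gt0 : (0 < p ^ k * m)%N. Proof. by rewrite muln_gt0 expn_gt0 prime_gt0. Qed.

Let p_ndvd_divisor d : (d %| m)%N -> ~~ (p %| d)%N.
Proof. by move=> dm; apply: contraNN p_ndvd_m => /dvdn_trans; apply. Qed.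

Let dvdn_pfactor j d : ~~ (p %| d)%N -> (d %| p ^ j * m)%N = (d %| m)%N.
Proof. by move=> npd; rewrite Gauss_dvdr // coprime_sym coprimeXl // prime_coprime. Qed.

Lemma perm_sqdivisors_pfactor :
  perm_eq (sqdivisors (p ^ k * m)) (sqdivisors m ++ [seq p * d | d <- sqdivisors m])%N.
Proof.
apply: uniq_perm.
- exact/filter_uniq/divisors_uniq.
- rewrite cat_uniq !filter_uniq ?divisors_uniq //= map_inj_uniq ?filter_uniq ?divisors_uniq //.
    rewrite andbT; apply/hasPn => _ /mapP [d _ ->]; rewrite mem_sqdivisors //.
    by apply: contraNN p_ndvd_m => /andP [/(dvdn_trans (dvdn_mulr d (dvdnn p)))].
  by move=> x y /eqP; rewrite eqn_pmul2l ?prime_gt0 // => /eqP.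
move=> x; rewrite mem_cat !mem_sqdivisors //.
apply/idP/idP => [/andP [xn sqx]|].
  have [px|npx] := boolP (p %| x)%N; last by rewrite -(dvdn_pfactor k) // xn sqx.
  case/dvdnP: px sqx xn => d -> {x}; rewrite mulnC squarefree_mul_prime // => /andP [npd sqd].
  rewrite -(prednK k_gt0) expnS -mulnA dvdn_pmul2l ?prime_gt0 // dvdn_pfactor // => dm.
  by apply/orP; right; apply: map_f; rewrite mem_sqdivisors // dm sqd.
case/orP=> [/andP [xm ->]|/mapP [d]]; first by rewrite dvdn_mull.
rewrite mem_sqdivisors // => /andP [dm sqd] ->.
by rewrite squarefree_mul_prime // p_ndvd_divisor // sqd dvdn_mul ?dvdn_exp.
Qed.

Let mu_mul_sqdivisors d : d \in sqdivisors m -> mu (p * d) = - mu d.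
Proof.
by rewrite mem_sqdivisors // => /andP [dm _]; apply/mu_mul_prime/p_ndvd_divisor.
Qed.

Lemma big_mu_divisors_pfactor (R : Type) (idx : R) (op : Monoid.com_law idx)
    (e : int) (f : nat -> R) : e != 0 ->
  \big[op/idx]_(d <- divisors (p ^ k * m) | mu d == e) f d =
  op (\big[op/idx]_(d <- divisors m | mu d == e) f d)
     (\big[op/idx]_(d <- divisors m | mu d == - e) f (p * d)%N).
Proof.
move=> e0; rewrite !big_mu_eq_sqdivisors ?oppr_eq0 //.
rewrite (perm_big _ perm_sqdivisors_pfactor) big_cat big_map /=.
congr (op _ _); rewrite big_seq_cond [RHS]big_seq_cond; apply: eq_bigl => d.
by case: (boolP (d \in _)) => //= /mu_mul_sqdivisors ->; rewrite eqr_oppLR.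
Qed.

Lemma sum_mu_divisors_pfactor (V : lmodType int) (f : nat -> V) :
  \sum_(d <- divisors (p ^ k * m)) mu d *: f d =
  \sum_(d <- divisors m) mu d *: f d - \sum_(d <- divisors m) mu d *: f (p * d)%N.
Proof.
rewrite !sum_mu_sqdivisors (perm_big _ perm_sqdivisors_pfactor).
rewrite big_cat big_map /= -sumrN; congr (_ + _).
by rewrite !big_seq; apply: eq_bigr => d /mu_mul_sqdivisors ->; rewrite scaleNr.
Qed.

End PrimePowerSplit.

Lemma pfactor_decomposition p n : prime p -> (0 < n)%N ->
  exists2 m, coprime p m & n = (p ^ logn p n * m)%N.
Proof.
by move=> pp n0; have [m pm nE] := pfactor_coprime pp n0; exists m; rewrite // {1}nE mulnC.
Qed.

Lemma big_mu_divisors_const (R : Type) (idx : R) (op : Monoid.com_law idx) (x : R) n :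
  (1 < n)%N ->
  \big[op/idx]_(d <- divisors n | mu d == 1) x = \big[op/idx]_(d <- divisors n | mu d == -1) x.
Proof.
move=> n1; have pp := pdiv_prime n1; have n0 := ltnW n1.
have k0 : (0 < logn (pdiv n) n)%N by rewrite logn_gt0 mem_primes pp n0 pdiv_dvd.
have [m pm ->] := pfactor_decomposition pp n0.
by rewrite !(big_mu_divisors_pfactor pp pm k0 op (fun=> x)) ?oppr_eq0 // opprK Monoid.mulmC.
Qed.

Lemma sum_mu_divisors_const (V : lmodType int) (v : V) n :
  (1 < n)%N -> \sum_(d <- divisors n) mu d *: v = 0.
Proof.
move=> n1; have pp := pdiv_prime n1; have n0 := ltnW n1.
have k0 : (0 < logn (pdiv n) n)%N by rewrite logn_gt0 mem_primes pp n0 pdiv_dvd.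
have [m pm ->] := pfactor_decomposition pp n0.
by rewrite sum_mu_divisors_pfactor // subrr.
Qed.

Lemma qsubE p d : qsub p d = comp_poly 'X^d p.
Proof. by []. Qed.

Lemma qsub1 p : qsub p 1 = p.
Proof. by rewrite /qsub expr1 comp_polyXr. Qed.

Lemma qsubA p a b : qsub (qsub p a) b = qsub p (a * b).
Proof. by rewrite /qsub -comp_polyA comp_Xn_poly -exprM mulnC. Qed.

Lemma qsub_prod (I : Type) (r : seq I) (Q : pred I) (F : I -> {poly int}) b :
  qsub (\prod_(i <- r | Q i) F i) b = \prod_(i <- r | Q i) qsub (F i) b.
Proof. by rewrite qsubE rmorph_prod. Qed.

Lemma horner1_qsub p d : (qsub p d).[1] = p.[1].
Proof. by rewrite /qsub horner_comp hornerXn expr1n. Qed.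

Lemma qint1 : qint 1 = 1.
Proof. by rewrite /qint big_ord1. Qed.

Lemma horner_qint n : (qint n).[1] = n%:R.
Proof.
rewrite /qint horner_sum (eq_bigr (fun=> 1)) => [|i _]; last by rewrite hornerXn expr1n.
by rewrite sumr_const card_ord.
Qed.

Lemma qsub_qint n a : qsub (qint n) a = \sum_(i < n) 'X^a ^+ i.
Proof. by rewrite qsubE rmorph_sum; apply: eq_bigr => i _; rewrite /= comp_Xn_poly. Qed.

Lemma Xn_sub1 n : 'X^n - 1 = ('X - 1) * qint n :> {poly int}.
Proof. exact: subrX1. Qed.

Lemma Xsub1_neq0 : ('X - 1 : {poly int}) != 0.
Proof. by rewrite -polyC1 polyXsubC_eq0. Qed.

Lemma qintM a b : qint (a * b) = qint a * qsub (qint b) a.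
Proof.
apply: (mulfI Xsub1_neq0); rewrite -Xn_sub1 mulrA -Xn_sub1 exprM.
by rewrite qsub_qint subrX1.
Qed.

Lemma Cyclotomic1 : 'Phi_1 = 'X - 1.
Proof. by have := prod_Cyclotomic (ltn0Sn 0); rewrite big_seq1 expr1. Qed.

Lemma divisors_prime p : prime p -> divisors p = [:: 1; p]%N.
Proof.
move=> pp; apply: (irr_sorted_eq ltn_trans ltnn (sorted_divisors_ltn p)).
  by rewrite /= prime_gt1.
move=> d; rewrite -dvdn_divisors ?prime_gt0 // !inE.
apply/idP/idP => [|/orP [] /eqP ->]; [by case/primeP: pp => _; apply | exact: dvd1n | exact: dvdnn].
Qed.

Lemma Cyclotomic_prime p : prime p -> 'Phi_p = qint p.
Proof.
move=> pp; apply: (mulfI Xsub1_neq0).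
rewrite -Xn_sub1 -(prod_Cyclotomic (prime_gt0 pp)) divisors_prime //.
by rewrite big_cons big_seq1 Cyclotomic1.
Qed.

Lemma pdvdpp d : pdvd d d.
Proof. by exists 1; rewrite mul1r. Qed.

Lemma pdvd_mulr d a b : pdvd d a -> pdvd d (a * b).
Proof. by case=> r ->; exists (r * b); rewrite mulrAC. Qed.

Lemma pdvd_mull d a b : pdvd d b -> pdvd d (a * b).
Proof. by rewrite mulrC; apply: pdvd_mulr. Qed.

Lemma pdvd_mul d1 d2 a1 a2 : pdvd d1 a1 -> pdvd d2 a2 -> pdvd (d1 * d2) (a1 * a2).
Proof. by move=> [r1 ->] [r2 ->]; exists (r1 * r2); rewrite mulrACA. Qed.

Lemma pdvdN d a : pdvd d a -> pdvd d (- a).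
Proof. by case=> r ->; exists (- r); rewrite mulNr. Qed.

Lemma pdvd_qsub d a e : pdvd d a -> pdvd (qsub d e) (qsub a e).
Proof. by case=> r ->; exists (qsub r e); rewrite !qsubE rmorphM. Qed.

Lemma pdvdD d a b : pdvd d a -> pdvd d b -> pdvd d (a + b).
Proof. by move=> [r ->] [s ->]; exists (r + s); rewrite mulrDl. Qed.

Lemma pdvd_sum d (I : Type) (r : seq I) (F : I -> {poly int}) :
  (forall i, pdvd d (F i)) -> pdvd d (\sum_(i <- r) F i).
Proof.
move=> dF; apply: (big_ind (pdvd d)) => //; [by exists 0; rewrite mul0r | exact: pdvdD].
Qed.

Lemma pdvd_qint_Xn_sub_mod P a : pdvd (qint P) ('X^a - 'X^(a %% P)).
Proof.
have -> : 'X^a - 'X^(a %% P) = ('X^P ^+ (a %/ P) - 1) * 'X^(a %% P) :> {poly int}.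
  by rewrite mulrBl mul1r -exprM -exprD mulnC -divn_eq.
by rewrite subrX1 Xn_sub1; apply/pdvd_mulr/pdvd_mulr/pdvd_mull/pdvdpp.
Qed.

Lemma modn_mull_inj P m : coprime P m -> {in gtn P &, injective (fun i => m * i %% P)}%N.
Proof.
move=> Pm i j ltiP ltjP /eqP; wlog lij : i j ltiP ltjP / (i <= j)%N => [hw|].
  by case/orP: (leq_total i j) => lij; [|rewrite eq_sym => /hw -> //]; apply: hw.
rewrite eq_sym eqn_mod_dvd ?leq_mul2l ?lij ?orbT // -mulnBr Gauss_dvdr //.
have [|ji_gt0] := posnP (j - i); first lia.
by move/(dvdn_leq ji_gt0); rewrite !inE /= in ltiP ltjP; lia.
Qed.

Lemma pdvd_qint_qsub P m : coprime P m -> pdvd (qint P) (qsub (qint P) m).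
Proof.
move=> Pm; rewrite qsub_qint.
have [P0|P_gt0] := posnP P; first by rewrite P0 big_ord0; exists 0; rewrite mul0r.
have -> : \sum_(i < P) 'X^m ^+ i =
    \sum_(i < P) ('X^(m * i) - 'X^(m * i %% P)) + \sum_(i < P) 'X^(m * i %% P) :> {poly int}.
  by rewrite -big_split; apply: eq_bigr => i _; rewrite /= subrK exprM.
apply: pdvdD; first by apply: pdvd_sum => i; apply: pdvd_qint_Xn_sub_mod.
pose h (i : 'I_P) := Ordinal (ltn_pmod (m * i) P_gt0).
have h_inj : injective h.
  by move=> i j /(congr1 val) /(modn_mull_inj Pm (ltn_ord i) (ltn_ord j)) /val_inj.
by rewrite [X in pdvd X _](reindex_inj h_inj); apply: pdvdpp.
Qed.

Lemma eq_big_seq_cond {R : Type} {idx : R} {op : R -> R -> R} {I : eqType}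
    {r : seq I} {P : pred I} {F1 F2 : I -> R} :
  {in r, F1 =1 F2} -> \big[op/idx]_(i <- r | P i) F1 i = \big[op/idx]_(i <- r | P i) F2 i.
Proof. by move=> eqF; rewrite big_seq_cond [RHS]big_seq_cond; apply: eq_bigr => i /andP [/eqF]. Qed.

Lemma big_mu_divisors1 (R : Type) (idx : R) (op : Monoid.law idx) (e : int) (f : nat -> R) :
  \big[op/idx]_(d <- divisors 1 | mu d == e) f d = if e == 1 then f 1%N else idx.
Proof.
rewrite (_ : divisors 1 = [:: 1%N]) // big_cons big_nil mu1 eq_sym.
by case: eqP => // _; rewrite Monoid.mulm1.
Qed.

Lemma sum_mu_divisors1 (V : lmodType int) (f : nat -> V) :
  \sum_(d <- divisors 1) mu d *: f d = f 1%N.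
Proof. by rewrite (_ : divisors 1 = [:: 1%N]) // big_seq1 mu1 scale1r. Qed.

Definition euler_gauss_prod (a : nat -> {poly int}) n (e : int) :=
  \prod_(d <- divisors n | mu d == e) qsub (a (n %/ d)%N) d.

Definition gauss_sum (a : nat -> {poly int}) n :=
  \sum_(d <- divisors n) mu d *: qsub (a (n %/ d)%N) d.

Definition cyclo_seq (c : nat -> nat) n : {poly int} :=
  if n == 1%N then 'Phi_1 else qsub 'Phi_(c n) (n %/ c n).

Section CycloSeq.

Variable c : nat -> nat.
Hypothesis c_prime : forall n, (1 < n)%N -> prime (c n).
Hypothesis c_dvd : forall n, (c n %| n)%N.
Hypothesis c_hereditary :
  forall n x, (1 < n)%N -> (x %| n)%N -> (c n %| x)%N -> c x = c n.

Local Notation a := (cyclo_seq c).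
Local Notation E := (euler_gauss_prod a).
Local Notation T := (gauss_sum a).

Lemma cyclo_seq_qsub n x d : (1 < n)%N -> (x %| n)%N -> (d %| x)%N ->
  (c n %| x %/ d)%N -> qsub (a (x %/ d)%N) d = qsub 'Phi_(c n) (x %/ c n)%N.
Proof.
move=> n1 xn dx cnx; have x_gt0 := dvdn_gt0 (ltnW n1) xn.
have d_gt0 := dvdn_gt0 x_gt0 dx.
have xd_gt0 : (0 < x %/ d)%N by rewrite divn_gt0 // dvdn_leq.
have xd_gt1 := leq_trans (prime_gt1 (c_prime n1)) (dvdn_leq xd_gt0 cnx).
rewrite /cyclo_seq gtn_eqF // (c_hereditary n1 (dvdn_trans (dvdn_div dx) xn) cnx).
by rewrite qsubA divn_mulAC // divnK.
Qed.

Section PrimeFactorStep.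

Variables P k m : nat.
Hypotheses (P_prime : prime P) (P_coprime_m : coprime P m) (k_gt0 : (0 < k)%N).
Local Notation n := (P ^ k * m)%N.
Hypothesis cn_eq : c n = P.
Local Notation F := (qsub 'Phi_P (n %/ P)%N).

Let P_gt0 : (0 < P)%N. Proof. exact: prime_gt0. Qed.
Let m_gt0 : (0 < m)%N. Proof. exact: coprime_prime_gt0 P_coprime_m. Qed.
Let n_gt1 : (1 < n)%N.
Proof.
apply: leq_trans (prime_gt1 P_prime) (leq_trans _ (leq_pmulr _ m_gt0)).
by rewrite -{1}(expn1 P) leq_pexp2l.
Qed.

Lemma qsub_cyclo_seq_coprime : {in divisors m, forall d, qsub (a (n %/ d)%N) d = F}.
Proof.
move=> d; rewrite -dvdn_divisors // => dm.
rewrite (cyclo_seq_qsub n_gt1 (dvdnn n) (dvdn_mull _ dm)) cn_eq //.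
by rewrite -muln_divA // dvdn_mulr // dvdn_exp.
Qed.

Lemma euler_gauss_prod_pfactor e : e != 0 ->
  E n e = \prod_(d <- divisors m | mu d == e) F *
          \prod_(d <- divisors m | mu d == - e) qsub (a (n %/ (P * d))%N) (P * d)%N.
Proof.
move=> e0; rewrite /euler_gauss_prod.
rewrite (big_mu_divisors_pfactor P_prime P_coprime_m k_gt0 _ (fun d => qsub (a (n %/ d)%N) d)) //.
by rewrite (eq_big_seq_cond qsub_cyclo_seq_coprime).
Qed.

Lemma qsub_cyclo_seq_pow (k_gt1 : (1 < k)%N) :
  {in divisors m, forall d, qsub (a (n %/ (P * d))%N) (P * d) = F}.
Proof.
move=> d; rewrite -dvdn_divisors // => dm.
rewrite (cyclo_seq_qsub n_gt1 (dvdnn n)) ?cn_eq ?dvdn_mul ?dvdn_exp //.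
rewrite -(prednK k_gt0) expnS -mulnA divnMl // -muln_divA // dvdn_mulr //.
by rewrite dvdn_exp // -ltnS prednK.
Qed.

Lemma qsub_cyclo_seq_simple (k1 : k = 1%N) :
  {in divisors m, forall d,
    qsub (a (n %/ (P * d))%N) (P * d) = qsub (qsub (a (m %/ d)%N) d) P}.
Proof. by move=> d _; rewrite k1 expn1 divnMl // qsubA mulnC. Qed.

Lemma euler_gauss_step :
  pdvd (qint m) (E m 1 - E m (-1)) -> pdvd (qint n) (E n 1 - E n (-1)).
Proof.
move=> IHm; rewrite !euler_gauss_prod_pfactor ?oppr_eq0 // opprK.
have [k_gt1|k_le1] := ltnP 1 k.
  rewrite !(eq_big_seq_cond (qsub_cyclo_seq_pow k_gt1)) [X in _ - X]mulrC subrr.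
  by exists 0; rewrite mul0r.
have k1 : k = 1%N by lia.
have qsub_E e : \prod_(d <- divisors m | mu d == e) qsub (qsub (a (m %/ d)%N) d) P =
    qsub (E m e) P by rewrite qsub_prod.
rewrite !(eq_big_seq_cond (qsub_cyclo_seq_simple k1)) !qsub_E.
rewrite k1 expn1 qintM mulKn // Cyclotomic_prime //.
have [m_gt1|m_le1] := ltnP 1 m; last first.
  have -> : m = 1%N by lia.
  rewrite /euler_gauss_prod !big_mu_divisors1 /= qint1 !qsub1 /cyclo_seq /=.
  rewrite Cyclotomic1 !qsubE rmorph1 rmorphB rmorph1 /= comp_polyX Xn_sub1.
  by exists (2%:R - 'X); ring.
rewrite -(big_mu_divisors_const _ _ m_gt1) -mulrBr.
have -> : qsub (E m (-1)) P - qsub (E m 1) P = - qsub (E m 1 - E m (-1)) P.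
  by rewrite !qsubE rmorphB opprB.
rewrite big_mkcond (bigD1_seq 1%N) ?divisor1 ?divisors_uniq //= mulrN mulrAC.
apply/pdvdN/pdvd_mulr/pdvd_mul; [exact: pdvd_qint_qsub | exact: pdvd_qsub].
Qed.

Lemma gauss_sum_step (k1 : k = 1%N) :
  (T n).[1] = if m == 1%N then P%:R else - (T m).[1].
Proof.
rewrite /gauss_sum.
rewrite (sum_mu_divisors_pfactor P_prime P_coprime_m k_gt0 (fun d => qsub (a (n %/ d)%N) d)).
have -> : \sum_(d <- divisors m) mu d *: qsub (a (n %/ d)%N) d =
          \sum_(d <- divisors m) mu d *: F.
  by apply: eq_big_seq => d /qsub_cyclo_seq_coprime ->.
have -> : \sum_(d <- divisors m) mu d *: qsub (a (n %/ (P * d))%N) (P * d) = qsub (T m) P.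
  rewrite /gauss_sum qsubE linear_sum; apply: eq_big_seq => d /(qsub_cyclo_seq_simple k1) ->.
  by rewrite linearZ.
rewrite hornerD hornerN horner1_qsub; have [m_gt1|m_le1] := ltnP 1 m; last first.
  have -> : m = 1%N by lia.
  rewrite /gauss_sum !sum_mu_divisors1 !horner1_qsub Cyclotomic_prime // horner_qint.
  by rewrite /cyclo_seq /= Cyclotomic1 !hornerE.
by rewrite sum_mu_divisors_const // horner0 add0r gtn_eqF.
Qed.

End PrimeFactorStep.

Lemma cyclo_seq_decomposition n : (1 < n)%N -> exists m,
  [/\ coprime (c n) m, 0 < logn (c n) n, 0 < m, m < n & n = c n ^ logn (c n) n * m]%N.
Proof.
move=> n1; have n_gt0 := ltnW n1; have cn_prime := c_prime n1.
have k_gt0 : (0 < logn (c n) n)%N by rewrite logn_gt0 mem_primes cn_prime n_gt0 c_dvd.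
have [m cm nE] := pfactor_decomposition cn_prime n_gt0; exists m.
have m_gt0 : (0 < m)%N by move: n_gt0; rewrite nE muln_gt0 => /andP [].
by split=> //; rewrite {1}nE ltn_Pmull // -(exp1n (logn (c n) n)) ltn_exp2r // prime_gt1.
Qed.

Theorem cyclo_seq_euler_gauss : q_Euler_Gauss a.
Proof.
elim/ltn_ind=> n IH n_gt0; have [n_gt1|n_le1] := ltnP 1 n; last first.
  by rewrite (_ : n = 1%N) ?qint1; [exists (E 1 1 - E 1 (-1)); rewrite mulr1 | lia].
have [m [cm k_gt0 m_gt0 mn nE]] := cyclo_seq_decomposition n_gt1.
have cn : c (c n ^ logn (c n) n * m) = c n by rewrite -nE.
by rewrite nE; apply: euler_gauss_step (c_prime n_gt1) cm k_gt0 cn (IH m mn m_gt0).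
Qed.

Lemma gauss_sum_at1 n : (1 < n)%N -> squarefree n ->
  exists2 p, prime p & (p %| n)%N /\ `|(T n).[1]|%N = p.
Proof.
elim/ltn_ind: n => n IH n_gt1 sqn.
have [m [cm k_gt0 m_gt0 mn nE]] := cyclo_seq_decomposition n_gt1.
have cn : c (c n ^ logn (c n) n * m) = c n by rewrite -nE.
have k1 : logn (c n) n = 1%N by rewrite logn_squarefree ?c_prime ?c_dvd.
rewrite nE (gauss_sum_step (c_prime n_gt1) cm k_gt0 cn k1) k1 expn1.
have [m_gt1|m_le1] := ltnP 1 m; last first.
  have -> : m = 1%N by lia.
  by exists (c n); rewrite ?c_prime //= muln1 natz dvdnn.
have sqm : squarefree m by apply: squarefree_dvd sqn; rewrite nE dvdn_mull.
have [p p_prime [pm Tp]] := IH m mn m_gt1 sqm.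
by exists p; rewrite ?gtn_eqF ?abszN ?dvdn_mull.
Qed.

Theorem cyclo_seq_not_gauss n : (1 < n)%N -> ~~ prime n -> squarefree n -> ~ q_Gauss_at a n.
Proof.
move=> n_gt1 n_nprime sqn; rewrite /q_Gauss_at => -[r Tr].
have [p p_prime [pn Tp]] := gauss_sum_at1 n_gt1 sqn.
have np : (n %| p)%N by rewrite -Tp /gauss_sum Tr hornerM horner_qint natz abszM dvdn_mull.
by move: n_nprime; rewrite (_ : n = p) ?p_prime //; apply/eqP; rewrite eqn_dvd pn np.
Qed.

End CycloSeq.

Lemma pdiv_hereditary n x : (1 < n)%N -> (x %| n)%N -> (pdiv n %| x)%N -> pdiv x = pdiv n.
Proof.
move=> n_gt1 xn pnx; have pn_prime := pdiv_prime n_gt1.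
have x_gt1 := leq_trans (prime_gt1 pn_prime) (dvdn_leq (dvdn_gt0 (ltnW n_gt1) xn) pnx).
apply/eqP; rewrite eqn_leq pdiv_min_dvd ?prime_gt1 //=.
exact: pdiv_min_dvd (prime_gt1 (pdiv_prime x_gt1)) (dvdn_trans (pdiv_dvd x) xn).
Qed.

Lemma max_pdiv_hereditary n x :
  (1 < n)%N -> (x %| n)%N -> (max_pdiv n %| x)%N -> max_pdiv x = max_pdiv n.
Proof.
move=> n_gt1 xn pnx; have pn_prime := max_pdiv_prime n_gt1.
have x_gt0 := dvdn_gt0 (ltnW n_gt1) xn.
have x_gt1 := leq_trans (prime_gt1 pn_prime) (dvdn_leq x_gt0 pnx).
apply/eqP; rewrite eqn_leq !max_pdiv_max // mem_primes ?pn_prime ?max_pdiv_prime //.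
  by rewrite x_gt0.
by rewrite ltnW // (dvdn_trans (max_pdiv_dvd x)).
Qed.

Theorem theorem10 :
  q_Euler_Gauss Gseq /\ q_Euler_Gauss Sseq /\
  (forall n : nat, (1 < n)%N -> ~~ prime n -> squarefree n ->
     ~ q_Gauss_at Gseq n /\ ~ q_Gauss_at Sseq n).
Proof.
split; first exact: (cyclo_seq_euler_gauss max_pdiv_prime max_pdiv_dvd max_pdiv_hereditary).
split; first exact: (cyclo_seq_euler_gauss pdiv_prime pdiv_dvd pdiv_hereditary).
move=> n n_gt1 n_nprime sqn; split.
  exact: (cyclo_seq_not_gauss max_pdiv_prime max_pdiv_dvd max_pdiv_hereditary n_gt1).
exact: (cyclo_seq_not_gauss pdiv_prime pdiv_dvd pdiv_hereditary n_gt1).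
Qed.
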